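(* Let $\Omega$ be a finite set and let $f_1,\ldots,f_n\in\mathbb{R}^{\Omega}$ be gambles. Let $$\mathcal M=\{p\in\mathbb{R}^{\Omega}: p\cdot f_i\ge 0 \text{ for } i=1,\ldots,n,\ p\cdot 1_\Omega=1\}$$ be a nonempty credal set (a nonempty, closed, convex set of probability mass vectors). Let $E\in\mathcal M$, let $I=\{i: E\cdot f_i=0\}$, and for $i\in I$ let $f'_i=f_i-\frac{f_i\cdot 1_\Omega}{|\Omega|}1_\Omega$ (so that $f_i-f'_i$ is constant and $f'_i\cdot 1_\Omega=0$). For $\underline{\alpha}=(\alpha_i)_{i\in I}$ with $\alpha_i\ge 0$ and $\beta\in\mathbb{R}$ put $h(\underline{\alpha},\beta)=\sum_{i\in I}\alpha_i f'_i+\beta 1_\Omega$. Let $P$ be a linear prevision (probability mass vector) on $\Omega$. Then $$\max_{(\underline{\alpha},\beta)}\frac{|E\cdot h(\underline{\alpha},\beta)-P\cdot h(\underline{\alpha},\beta)|}{\|h(\underline{\alpha},\beta)\|}=\max_{\underline{\alpha}}\frac{|E\cdot h(\underline{\alpha},0)-P\cdot h(\underline{\alpha},0)|}{\|h(\underline{\alpha},0)\|},$$ where the maxima range over those parameters for which the denominator is nonzero.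
   Context: $f\cdot g=\sum_{x\in\Omega}f(x)g(x)$ is the standard inner product on $\mathbb{R}^{\Omega}$, $\|f\|=\sqrt{f\cdot f}$ the Euclidean norm, and $1_\Omega$ the constant vector $1$. A linear prevision is identified with a probability mass vector $P$ and acts on gambles by $P(f)=P\cdot f$. *)

From mathcomp Require Import all_boot all_order all_algebra.
Set Implicit Arguments. Unset Strict Implicit. Unset Printing Implicit Defensive.
Import Order.TTheory GRing.Theory Num.Theory.
Local Open Scope ring_scope.

Section Defs.
Variables (R : rcfType) (T : finType).

Definition dot (f g : T -> R) : R := \sum_(x : T) f x * g x.
Definition norm (f : T -> R) : R := Num.sqrt (dot f f).
Definition one : T -> R := fun _ => 1.
Definition is_pmf (p : T -> R) : Prop := (forall x, 0 <= p x) /\ dot p one = 1.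
Definition in_credal (n : nat) (f : 'I_n -> T -> R) (p : T -> R) : Prop :=
  (forall i, 0 <= dot p (f i)) /\ dot p one = 1.
Definition zero_set (n : nat) (f : 'I_n -> T -> R) (E : T -> R) : {set 'I_n} :=
  [set i | dot E (f i) == 0].
Definition centered (g : T -> R) : T -> R :=
  fun x => g x - dot g one / #|T|%:R.
Definition hfun (n : nat) (I : {set 'I_n}) (f : 'I_n -> T -> R)
  (a : 'I_n -> R) (b : R) : T -> R :=
  fun x => \sum_(i in I) a i * centered (f i) x + b.
Definition dev_ratio (E P h : T -> R) : R := `|dot E h - dot P h| / norm h.

End Defs.

Definition greatest {R : rcfType} (S : R -> Prop) (m : R) : Prop :=
  S m /\ forall r, S r -> r <= m.

(* With d := E - P we have <d, 1> = 0, and every f'_i is orthogonal to 1.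
   Adding b 1 to h therefore leaves <d, h> unchanged and can only increase |h|,
   so the maximum over (alpha, b) is the maximum over alpha with b = 0, as soon
   as the latter is attained.  Attainment is the real content: over the cone K
   spanned by the f'_i, |<d, w>| / |w| is bounded by the norms of the metric
   projections of d and -d onto K (Cauchy-Schwarz plus the variational
   inequality of the projection), and these bounds are attained at the
   projections themselves.  The projection onto K exists over any real closed
   field: take the nearest of the finitely many faces on which the orthogonal
   projection onto the span has nonnegative coefficients; an active-set pivot
   shows that every point of K is at least as far away. *)

From Pilot Require Import Defs.
From mathcomp Require Import all_boot all_order all_algebra.
From mathcomp Require Import ring lra.
Set Implicit Arguments. Unset Strict Implicit. Unset Printing Implicit Defensive.
Import Order.TTheory GRing.Theory Num.Theory.
Local Open Scope ring_scope.

Section OrderedField.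
Variables (R : rcfType) (I : finType).

Lemma le0_quadratic (x y : R) : 0 <= y ->
  (forall s, 0 < s -> s <= 1 -> 2 * s * x <= s ^+ 2 * y) -> x <= 0.
Proof.
move=> y0 quad; rewrite leNgt; apply/negP => x0.
have [yx|xy] := leP y x.
  by have := quad 1 ltr01 (lexx _); rewrite expr1n; lra.
have y_gt0 : 0 < y := lt_trans x0 xy.
have := quad (x / y); rewrite divr_gt0 // ler_pdivrMr // mul1r ltW // => /(_ isT isT).
have -> : (x / y) ^+ 2 * y = x / y * x by field; rewrite gt_eqF.
have : 0 < x / y * x by rewrite !mulr_gt0 ?invr_gt0.
lra.
Qed.

(* The ratio test of the simplex method: [t] is the first time a coordinate
   vanishes on the segment from [a] to [b]. *)
Lemma ratio_test (S : {set I}) (a b : I -> R) j : j \in S -> b j < 0 ->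
  {in S, forall i, 0 < a i} ->
  exists t k, [/\ 0 <= t < 1, k \in S, a k + t * (b k - a k) = 0
                & {in S, forall i, 0 <= a i + t * (b i - a i)}].
Proof.
move=> jS bj a_gt0.
pose P i := (i \in S) && (b i < 0).
have Pj : P j by apply/andP.
case: (arg_minP (fun i => a i / (a i - b i)) Pj) => k /andP[kS bk] kmin.
have ak := a_gt0 k kS.
have abk : 0 < a k - b k by rewrite subr_gt0 (lt_trans bk).
set t := a k / (a k - b k).
have t0 : 0 <= t by rewrite divr_ge0 ?ltW.
have t1 : t < 1 by rewrite ltr_pdivrMr // mul1r ltrDl oppr_gt0.
exists t, k; split=> //; first by rewrite t0.
  by rewrite -[b k - a k]opprB mulrN divfK ?gt_eqF // subrr.
move=> i iS; have ai := ltW (a_gt0 i iS).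
have [bi_ge0|bi] := leP 0 (b i).
  rewrite (_ : a i + _ = (1 - t) * a i + t * b i); last by ring.
  by rewrite addr_ge0 // mulr_ge0 // subr_ge0 ltW.
have := kmin i; rewrite /P iS bi => /(_ isT).
rewrite ler_pdivlMr ?subr_gt0 ?(lt_le_trans bi ai) // -subr_ge0.
by rewrite -[b i - a i]opprB mulrN.
Qed.

End OrderedField.

Section InnerProduct.
Variables (R : rcfType) (T : finType).
Implicit Types (f g h p q : T -> R) (s b : R).
Local Notation one := (Defs.one R (T := T)).

Lemma eq_dot f f' g g' : f =1 f' -> g =1 g' -> dot f g = dot f' g'.
Proof. by move=> ef eg; apply: eq_bigr => x _; rewrite ef eg. Qed.

Lemma eq_norm f f' : f =1 f' -> norm f = norm f'.
Proof. by move=> ef; rewrite /norm (eq_dot ef ef). Qed.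

Lemma dotC f g : dot f g = dot g f.
Proof. by apply: eq_bigr => x _; rewrite mulrC. Qed.

Lemma dot_self_ge0 f : 0 <= dot f f.
Proof. by apply: sumr_ge0 => x _; rewrite -expr2 sqr_ge0. Qed.

Lemma dot_self_eq0 f : dot f f = 0 -> forall x, f x = 0.
Proof.
move=> ff0 x; apply/eqP; rewrite -sqrf_eq0 expr2.
by move/eqP: ff0; rewrite psumr_eq0 => [/allP/(_ x (mem_index_enum x))|y _];
  rewrite -?expr2 ?sqr_ge0.
Qed.

Lemma dot_combl f g h s :
  dot (fun x => f x + s * g x) h = dot f h + s * dot g h.
Proof. by rewrite /dot mulr_sumr -big_split; apply: eq_bigr => x _ /=; ring. Qed.

Lemma dot_combr f g h s :
  dot h (fun x => f x + s * g x) = dot h f + s * dot h g.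
Proof. by rewrite dotC dot_combl !(dotC h). Qed.

Lemma dot_comb_self f g s :
  dot (fun x => f x + s * g x) (fun x => f x + s * g x)
  = dot f f + 2 * s * dot f g + s ^+ 2 * dot g g.
Proof. rewrite dot_combl !dot_combr (dotC g f); ring. Qed.

Lemma dot_sqr_le f g : dot f g ^+ 2 <= dot f f * dot g g.
Proof.
have [gg0|gg_neq0] := eqVneq (dot g g) 0.
  rewrite gg0 mulr0 (eq_dot (frefl f) (dot_self_eq0 gg0)).
  by rewrite /dot big1 ?expr0n // => x _; rewrite mulr0.
have gg_gt0 : 0 < dot g g by rewrite lt_def gg_neq0 dot_self_ge0.
(* minimise the quadratic [s |-> |f + s g|^2] at [s = - <f,g> / <g,g>] *)
have := dot_self_ge0 (fun x => f x + (- (dot f g / dot g g)) * g x).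
rewrite dot_comb_self.
have -> : dot f f + 2 * - (dot f g / dot g g) * dot f g
            + (- (dot f g / dot g g)) ^+ 2 * dot g g
          = (dot f f * dot g g - dot f g ^+ 2) / dot g g by field.
by rewrite pmulr_lge0 ?invr_gt0 // subr_ge0.
Qed.

Lemma norm_ge0 f : 0 <= norm f.
Proof. exact: sqrtr_ge0. Qed.

Lemma sqr_norm f : norm f ^+ 2 = dot f f.
Proof. exact/sqr_sqrtr/dot_self_ge0. Qed.

Lemma ler_abs_dot f g : `|dot f g| <= norm f * norm g.
Proof.
rewrite /norm -sqrtrM ?dot_self_ge0 // -sqrtr_sqr.
exact/ler_wsqrtr/dot_sqr_le.
Qed.

Lemma norm_eq0_dot f g : norm f = 0 -> dot f g = 0.
Proof.
move=> f0; apply/eqP; rewrite -normr_le0.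
by apply: le_trans (ler_abs_dot f g) _; rewrite f0 mul0r.
Qed.

Lemma card_gt0_dot_one p : dot p one != 0 -> (0 < #|T|)%N.
Proof.
rewrite lt0n; apply: contraNneq => /card0_eq T0.
by rewrite /dot big_pred0.
Qed.

Lemma dotBl p q g : dot (fun x => p x - q x) g = dot p g - dot q g.
Proof. by rewrite /dot -sumrB; apply: eq_bigr => x _; rewrite mulrBl. Qed.

Lemma norm_le_shift g b : dot one g = 0 -> norm g <= norm (fun x => g x + b * one x).
Proof.
move=> g1; apply: ler_wsqrtr; rewrite dot_comb_self (dotC g) g1 mulr0 addr0.
by rewrite lerDl mulr_ge0 ?sqr_ge0 ?dot_self_ge0.
Qed.

Lemma dotNl f g : dot (fun x => - f x) g = - dot f g.
Proof. by rewrite /dot -sumrN; apply: eq_bigr => x _; rewrite mulNr. Qed.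

Definition dot_ratio p g := `|dot p g| / norm g.

Lemma eq_dot_ratio p g g' : g =1 g' -> dot_ratio p g = dot_ratio p g'.
Proof. by move=> gg'; rewrite /dot_ratio (eq_dot (frefl p) gg') (eq_norm gg'). Qed.

Lemma dot_ratio_ge0 p g : 0 <= dot_ratio p g.
Proof. by rewrite divr_ge0 ?norm_ge0. Qed.

Lemma dot_ratioN p g : dot_ratio (fun x => - p x) g = dot_ratio p g.
Proof. by rewrite /dot_ratio dotNl normrN. Qed.

Lemma dot_ratio_sqr p g : dot p g = norm g ^+ 2 -> dot_ratio p g = norm g.
Proof.
move=> pg; rewrite /dot_ratio pg ger0_norm ?sqr_ge0 // expr2.
by have [->|g_neq0] := eqVneq (norm g) 0; rewrite ?mul0r // mulfK.
Qed.

Lemma dot_ratio_le p g m : 0 <= m -> dot p g <= m * norm g ->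
  - dot p g <= m * norm g -> dot_ratio p g <= m.
Proof.
move=> m_ge0 le_pg le_Npg; have [g0|g_neq0] := eqVneq (norm g) 0.
  by rewrite /dot_ratio g0 invr0 mulr0.
rewrite ler_pdivrMr ?lt_def ?g_neq0 ?norm_ge0 // ler_norml lerNl.
by rewrite le_Npg le_pg.
Qed.

Lemma dev_ratioE p q g : dev_ratio p q g = dot_ratio (fun x => p x - q x) g.
Proof. by rewrite /dev_ratio /dot_ratio dotBl. Qed.

Lemma dot_ratio_shift_le p g b : dot p one = 0 -> dot one g = 0 ->
  dot_ratio p (fun x => g x + b * one x) <= dot_ratio p g.
Proof.
move=> p1 g1; rewrite /dot_ratio dot_combr p1 mulr0 addr0.
have [g0|g_neq0] := eqVneq (norm g) 0.
  by rewrite (dotC p g) norm_eq0_dot // normr0 !mul0r.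
have g_gt0 : 0 < norm g by rewrite lt_def g_neq0 norm_ge0.
rewrite ler_wpM2l // lef_pV2 ?posrE ?norm_le_shift //.
exact: lt_le_trans (norm_le_shift b g1).
Qed.

End InnerProduct.

Section Cone.
Variables (R : rcfType) (T : finType) (I : finType) (u : I -> T -> R).
Implicit Types (S X : {set I}) (c e : I -> R) (v g : T -> R).

Definition lcomb S c : T -> R := fun x => \sum_(i in S) c i * u i x.

Lemma eq_lcomb S c c' : {in S, c =1 c'} -> lcomb S c =1 lcomb S c'.
Proof. by move=> cc' x; apply: eq_bigr => i /cc' ->. Qed.

Lemma lcomb_subset S X c : S \subset X -> {in X :\: S, c =1 (fun=> 0)} ->
  lcomb X c =1 lcomb S c.
Proof.
move=> sSX c0 x; rewrite /lcomb (big_setID S) /= (setIidPr sSX) addrC big1 ?add0r //.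
by move=> i /c0 ->; rewrite mul0r.
Qed.

Lemma lcomb_setD1 S j c x : j \in S -> lcomb S c x = c j * u j x + lcomb (S :\ j) c x.
Proof. by move=> jS; rewrite /lcomb (big_setD1 j jS). Qed.

Lemma lcomb_comb S c e s x :
  lcomb S (fun i => c i + s * e i) x = lcomb S c x + s * lcomb S e x.
Proof. by rewrite /lcomb mulr_sumr -big_split; apply: eq_bigr => i _ /=; ring. Qed.

Lemma dot_lcombr g S c : dot g (lcomb S c) = \sum_(i in S) c i * dot g (u i).
Proof.
rewrite /dot /lcomb; under eq_bigr do rewrite mulr_sumr.
rewrite exchange_big; apply: eq_bigr => i _; rewrite mulr_sumr.
by apply: eq_bigr => x _; ring.
Qed.

Lemma dot_lcombr_orth g S c : {in S, forall j, dot g (u j) = 0} -> dot g (lcomb S c) = 0.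
Proof. by move=> g0; rewrite dot_lcombr big1 // => i /g0 ->; rewrite mulr0. Qed.

Lemma span_proj_ex S v : exists c : {ffun I -> R},
  [forall j in S, dot (fun x => v x - lcomb S c x) (u j) == 0].
Proof.
have [k] := ubnP #|S|; elim: k S v => // k IH S v.
have [-> _|[j jS] ltSk] := set_0Vmem S.
  by exists [ffun=> 0]; apply/forall_inP => i; rewrite inE.
have ltS'k : (#|S :\ j| < k)%N by move: ltSk; rewrite (cardsD1 j S) jS.
have [c /forall_inP/(_ _ _)/eqP r_orth] := IH (S :\ j) v ltS'k.
have [c' /forall_inP/(_ _ _)/eqP w_orth] := IH (S :\ j) (u j) ltS'k.
pose r x := v x - lcomb (S :\ j) c x.
pose w x := u j x - lcomb (S :\ j) c' x.
(* Gram-Schmidt step; when [w = 0] the junk value [lam = 0] still works. *)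
pose lam := dot r w / dot w w.
have rw : dot r w = lam * dot w w.
  have [ww0|ww_neq0] := eqVneq (dot w w) 0; last by rewrite mulfVK.
  by rewrite ww0 mulr0 dotC norm_eq0_dot // /norm ww0 sqrtr0.
have uj x : u j x = w x + 1 * lcomb (S :\ j) c' x by rewrite /w; ring.
exists [ffun i => if i == j then lam else c i + (- lam) * c' i].
apply/forall_inP => i iS; apply/eqP.
have res x : v x - lcomb S [ffun i => if i == j then lam else c i + (- lam) * c' i] x
             = r x + (- lam) * w x.
  rewrite (lcomb_setD1 _ _ jS) ffunE eqxx.
  rewrite (eq_lcomb (c' := fun i => c i + (- lam) * c' i)); last first.
    by move=> l; rewrite !inE ffunE => /andP[/negbTE ->].
  by rewrite lcomb_comb /r /w; ring.
rewrite (eq_dot res (frefl _)) dot_combl.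
have [->|ij] := eqVneq i j.
  rewrite !(eq_dot (frefl _) uj) !dot_combr !(dot_lcombr_orth _ r_orth).
  by rewrite !(dot_lcombr_orth _ w_orth) rw; ring.
by rewrite r_orth ?w_orth ?mulr0 ?addr0 // !inE ij.
Qed.

(* Finfun coefficients let [xchoose] pick them without a choice axiom. *)
Definition span_coef S v : {ffun I -> R} := xchoose (span_proj_ex S v).

Lemma span_coef_orth S v c :
  dot (fun x => v x - lcomb S (span_coef S v) x) (lcomb S c) = 0.
Proof.
apply: dot_lcombr_orth => j jS.
by have /forall_inP/(_ j jS)/eqP := xchooseP (span_proj_ex S v).
Qed.

Definition sqdist v g := dot (fun x => v x - g x) (fun x => v x - g x).

Lemma eq_sqdist v g g' : g =1 g' -> sqdist v g = sqdist v g'.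
Proof. by move=> gg'; apply: eq_dot => x; rewrite gg'. Qed.

Lemma sqdist_span_coef S v e s :
  sqdist v (fun x => lcomb S (span_coef S v) x + s * lcomb S e x)
  = sqdist v (lcomb S (span_coef S v)) + s ^+ 2 * dot (lcomb S e) (lcomb S e).
Proof.
set b := span_coef S v.
rewrite /sqdist (eq_dot (f' := fun x => (v x - lcomb S b x) + (- s) * lcomb S e x)
                        (g' := fun x => (v x - lcomb S b x) + (- s) * lcomb S e x));
  try by move=> x; ring.
by rewrite dot_comb_self span_coef_orth sqrrN; ring.
Qed.

End Cone.

Definition nonneg_on (R : rcfType) (I : finType) (A : {set I}) (a : I -> R) :=
  forall i, i \in A -> 0 <= a i.

Section ConeProjection.
Variables (R : rcfType) (T : finType) (I : finType) (u : I -> T -> R) (A : {set I}).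
Implicit Types (S : {set I}) (a c : I -> R) (v d : T -> R).
Local Notation lcomb := (lcomb u).
Local Notation span_coef := (span_coef u).
Local Notation nonneg := (nonneg_on A).

Definition feasible v S := (S \subset A) && [forall i in S, 0 <= span_coef S v i].

Lemma lcomb_supp a : lcomb A a =1 lcomb [set i in A | a i != 0] a.
Proof.
apply: lcomb_subset => [|i]; first by apply/subsetP => i; rewrite inE => /andP[].
by rewrite !inE => /andP[+ iA]; rewrite iA negbK => /eqP.
Qed.

(* Induction on the support of [a]: unless the span coefficients [b] of the
   support are nonnegative, moving [a] towards [b] until a coordinate vanishes
   shrinks the support without increasing the distance. *)
Lemma feasible_sqdist_le v a : nonneg a ->
  exists2 S, feasible v S & sqdist v (lcomb S (span_coef S v)) <= sqdist v (lcomb A a).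
Proof.
have [k] := ubnP #|[set i in A | a i != 0]|; elim: k a => // k IH a.
set S := [set i in A | a i != 0] => ltSk a_ge0.
set b := span_coef S v.
have SA : S \subset A by apply/subsetP => i; rewrite inE => /andP[].
have a_gt0 : {in S, forall i, 0 < a i}.
  by move=> i; rewrite inE lt_def => /andP[iA ->]; rewrite a_ge0.
pose e i := a i + (-1) * b i.
have sqdist_a : sqdist v (lcomb A a)
                = sqdist v (lcomb S b) + 1 ^+ 2 * dot (lcomb S e) (lcomb S e).
  rewrite -sqdist_span_coef; apply: eq_sqdist => x.
  by rewrite lcomb_supp lcomb_comb; ring.
have [b_ge0|] := boolP [forall i in S, 0 <= b i].
  exists S; first by rewrite /feasible SA.
  by rewrite sqdist_a lerDl mulr_ge0 ?sqr_ge0 ?dot_self_ge0.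
case/forall_inPn => j jS; rewrite -ltNge => bj.
have [t [k' [/andP[t_ge0 t_lt1] k'S ak' at_ge0]]] := ratio_test jS bj a_gt0.
pose a' i := if i \in S then a i + t * (b i - a i) else 0.
have supp_a' : [set i in A | a' i != 0] \subset S :\ k'.
  apply/subsetP => i; rewrite inE in_setD1 /a'.
  case: (boolP (i \in S)) => _; last by rewrite eqxx /= !andbF.
  by rewrite andbT; case: (eqVneq i k') => [->|//]; rewrite ak' eqxx andbF.
have a'_ge0 : nonneg a' by move=> i _; rewrite /a'; case: ifP => // /at_ge0.
have [|S' feasS' le_S'] := IH a' _ a'_ge0.
  by move: ltSk; rewrite (cardsD1 k' S) k'S add1n ltnS; apply: leq_ltn_trans (subset_leq_card _).
exists S' => //; apply: le_trans le_S' _.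
have La' : lcomb A a' =1 (fun x => lcomb S b x + (1 - t) * lcomb S e x).
  move=> x; rewrite (lcomb_subset u SA) => [|i]; last by rewrite inE /a' => /andP[/negbTE ->].
  by rewrite -lcomb_comb; apply: eq_lcomb => i iS; rewrite /a' iS /e; ring.
rewrite (eq_sqdist _ La') sqdist_span_coef sqdist_a lerD2l ler_wpM2r ?dot_self_ge0 //.
by rewrite expr1n; apply: exprn_ile1; lra.
Qed.

Lemma cone_sqdist_min v : exists a0, nonneg a0 /\
  forall a, nonneg a -> sqdist v (lcomb A a0) <= sqdist v (lcomb A a).
Proof.
have feas0 : feasible v set0.
  by rewrite /feasible sub0set; apply/forall_inP => i; rewrite inE.
case: (arg_minP (fun S => sqdist v (lcomb S (span_coef S v))) feas0).
move=> S /andP[SA /forall_inP b_ge0] S_min.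
pose a0 i := if i \in S then span_coef S v i else 0.
exists a0; split; first by move=> i _; rewrite /a0; case: ifP => // /b_ge0.
move=> a a_ge0; have [S' feasS' le_S'] := feasible_sqdist_le v a_ge0.
have La0 : lcomb A a0 =1 lcomb S (span_coef S v).
  move=> x; rewrite (lcomb_subset u SA) => [|i]; last by rewrite inE /a0 => /andP[/negbTE ->].
  by apply: eq_lcomb => i iS; rewrite /a0 iS.
by rewrite (eq_sqdist _ La0); apply: le_trans (S_min S' feasS') le_S'.
Qed.

Lemma cone_proj_orth v : exists a0, [/\ nonneg a0,
  forall a, nonneg a -> dot (fun x => v x - lcomb A a0 x) (lcomb A a) <= 0
  & dot (fun x => v x - lcomb A a0 x) (lcomb A a0) = 0].
Proof.
have [a0 [a0_ge0 a0_min]] := cone_sqdist_min v.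
pose r x := v x - lcomb A a0 x.
(* first-order optimality of [a0] along every admissible direction [c] *)
have r_obtuse c : (forall s, 0 < s -> s <= 1 -> nonneg (fun i => a0 i + s * c i)) ->
    dot r (lcomb A c) <= 0.
  move=> c_adm; apply: le0_quadratic (dot_self_ge0 (lcomb A c)) _ => s s_gt0 s_le1.
  have := a0_min _ (c_adm s s_gt0 s_le1).
  have -> : sqdist v (lcomb A a0) = dot r r by [].
  have -> : sqdist v (lcomb A (fun i => a0 i + s * c i))
            = dot (fun x => r x + (- s) * lcomb A c x) (fun x => r x + (- s) * lcomb A c x).
    by apply: eq_dot => x; rewrite lcomb_comb /r; ring.
  by rewrite dot_comb_self sqrrN -addrA lerDl mulrN mulNr addrC subr_ge0.
exists a0; split=> // [a a_ge0|].
  by apply: r_obtuse => s s_gt0 _ i iA; rewrite addr_ge0 ?mulr_ge0 ?a0_ge0 ?a_ge0 ?ltW.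
apply/eqP; rewrite eq_le r_obtuse => [/=|s s_gt0 _ i iA]; last first.
  by rewrite addr_ge0 ?mulr_ge0 ?a0_ge0 ?ltW.
have := r_obtuse (fun i => - a0 i); rewrite !dot_lcombr.
under eq_bigr do rewrite mulNr; rewrite sumrN oppr_le0; apply=> s _ s_le1 i iA.
by rewrite mulrN -{1}[a0 i]mul1r -mulrBl mulr_ge0 ?subr_ge0 ?a0_ge0.
Qed.

Lemma cone_proj_bound v : exists a0, [/\ nonneg a0,
  forall a, nonneg a -> dot v (lcomb A a) <= norm (lcomb A a0) * norm (lcomb A a)
  & dot v (lcomb A a0) = norm (lcomb A a0) ^+ 2].
Proof.
have [a0 [a0_ge0 r_obtuse r_orth]] := cone_proj_orth v.
have dotv g : dot v g = dot (fun x => v x - lcomb A a0 x) g + 1 * dot (lcomb A a0) g.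
  by rewrite -dot_combl; apply: eq_dot => // x; ring.
exists a0; split=> // [a a_ge0|]; last by rewrite dotv r_orth add0r mul1r sqr_norm.
rewrite dotv mul1r; apply: ler_wnDl (r_obtuse a a_ge0) _.
exact: le_trans (ler_norm _) (ler_abs_dot _ _).
Qed.

(* The maximum of [|<d, w>| / |w|] over the cone is the larger of the norms of
   the projections of [d] and [-d] onto the cone. *)
Lemma cone_dot_ratio_argmax d : (exists a, nonneg a /\ norm (lcomb A a) != 0) ->
  exists a0, [/\ nonneg a0, norm (lcomb A a0) != 0 &
    forall a, nonneg a -> dot_ratio d (lcomb A a) <= dot_ratio d (lcomb A a0)].
Proof.
move=> [aw [aw_ge0 aw_neq0]].
have [a1 [a1_ge0 le1 eq1]] := cone_proj_bound d.
have [a2 [a2_ge0 le2 eq2]] := cone_proj_bound (fun x => - d x).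
set m := Num.max (norm (lcomb A a1)) (norm (lcomb A a2)).
have m_ge0 : 0 <= m by rewrite le_max norm_ge0.
have ratio_le a : nonneg a -> dot_ratio d (lcomb A a) <= m.
  move=> a_ge0; apply: dot_ratio_le => //.
    apply: le_trans (le1 a a_ge0) _; rewrite ler_wpM2r ?norm_ge0 //.
    by rewrite le_max lexx.
  rewrite -dotNl; apply: le_trans (le2 a a_ge0) _; rewrite ler_wpM2r ?norm_ge0 //.
  by rewrite le_max lexx orbT.
have [m0|m_neq0] := eqVneq m 0.
  by exists aw; split=> // a /ratio_le; rewrite m0 => /le_trans; apply; apply: dot_ratio_ge0.
have [a0 [a0_ge0 a0_neq0 ratio_a0]] : exists a0,
    [/\ nonneg a0, norm (lcomb A a0) != 0 & dot_ratio d (lcomb A a0) = m].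
  move: m_neq0; rewrite /m; have [_|_] := leP (norm (lcomb A a1)) (norm (lcomb A a2)).
    by move=> ?; exists a2; rewrite -dot_ratioN dot_ratio_sqr.
  by move=> ?; exists a1; rewrite dot_ratio_sqr.
by exists a0; split=> // a /ratio_le; rewrite ratio_a0.
Qed.

End ConeProjection.

Section Gambles.
Variables (R : rcfType) (T : finType).
Local Notation one := (Defs.one R (T := T)).

Lemma dot_one_centered (g : T -> R) : (0 < #|T|)%N -> dot one (centered g) = 0.
Proof.
move=> T_gt0; rewrite /dot /centered.
under eq_bigr do rewrite mul1r.
rewrite sumrB sumr_const (_ : #|xpredT| = #|T|) // -[_ / _ *+ _]mulr_natr.
rewrite divfK ?pnatr_eq0 -?lt0n //; apply/eqP; rewrite subr_eq0 /dot.
by apply/eqP/eq_bigr => x _; rewrite /one mulr1.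
Qed.

Lemma hfunE n (I : {set 'I_n}) (f : 'I_n -> T -> R) a b :
  hfun I f a b =1 (fun x => lcomb (fun i => centered (f i)) I a x + b * one x).
Proof. by move=> x; rewrite /one mulr1. Qed.

End Gambles.

Theorem corollary4 (R : rcfType) (T : finType) (n : nat)
  (f : 'I_n -> T -> R) (E P : T -> R)
  (HM : forall p, in_credal f p -> is_pmf p)
  (HE : in_credal f E) (HP : is_pmf P)
  (Hne : exists a : 'I_n -> R,
      (forall i, i \in zero_set f E -> 0 <= a i) /\
      norm (hfun (zero_set f E) f a 0) != 0) :
  exists m : R,
    greatest (fun r => exists (a : 'I_n -> R) (b : R),
                (forall i, i \in zero_set f E -> 0 <= a i) /\
                norm (hfun (zero_set f E) f a b) != 0 /\
                r = dev_ratio E P (hfun (zero_set f E) f a b)) m /\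
    greatest (fun r => exists a : 'I_n -> R,
                (forall i, i \in zero_set f E -> 0 <= a i) /\
                norm (hfun (zero_set f E) f a 0) != 0 /\
                r = dev_ratio E P (hfun (zero_set f E) f a 0)) m.
Proof.
set I := zero_set f E; pose u i := centered (f i); pose d x := E x - P x.
have [[_ E1] [_ P1]] := (HE, HP).
have d1 : dot d (@Defs.one R T) = 0 by rewrite dotBl E1 P1 subrr.
have u1 a : dot (@Defs.one R T) (lcomb u I a) = 0.
  rewrite dot_lcombr big1 // => i _; rewrite dot_one_centered ?mulr0 //.
  by apply: (@card_gt0_dot_one _ _ E); rewrite E1 oner_neq0.
have ratio_le a b : dev_ratio E P (hfun I f a b) <= dot_ratio d (lcomb u I a).
  by rewrite dev_ratioE (eq_dot_ratio _ (hfunE _ _ _ _)) dot_ratio_shift_le.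
have hfun0 a : hfun I f a 0 =1 lcomb u I a by move=> x; rewrite hfunE mul0r addr0.
have ratio0 a : dev_ratio E P (hfun I f a 0) = dot_ratio d (lcomb u I a).
  by rewrite dev_ratioE (eq_dot_ratio _ (hfun0 a)).
have norm0 a : norm (hfun I f a 0) = norm (lcomb u I a) := eq_norm (hfun0 a).
have cone_ne : exists a, nonneg_on I a /\ norm (lcomb u I a) != 0.
  by case: Hne => a [a_ge0 a_neq0]; exists a; rewrite -norm0.
have [a0 [a0_ge0 a0_neq0 a0_max]] := cone_dot_ratio_argmax d cone_ne.
exists (dot_ratio d (lcomb u I a0)); split; split.
- by exists a0, 0; rewrite norm0 ratio0.
- by move=> _ [a [b [a_ge0 [_ ->]]]]; apply: le_trans (ratio_le a b) (a0_max a a_ge0).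
- by exists a0; rewrite norm0 ratio0.
- by move=> _ [a [a_ge0 [_ ->]]]; rewrite ratio0; apply: a0_max.
Qed.
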